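(* Let $E = [c_1,d_1]\cup\cdots\cup[c_k,d_k]$ with $0 = c_1 \le d_1 < c_2 \le d_2 < \cdots < c_k \le d_k = 1$, and let $\operatorname{meas}(E) = \sum_{i=1}^k (d_i - c_i)$. Then \[ \beta(E) := \max_{q} \min\left(\mathbb{E}_{i\sim q}[U_0(i)],\ \mathbb{E}_{i\sim q}[U_1(i)]\right) \ge \frac{1}{2 - \operatorname{meas}(E)}, \] where the maximum is over probability distributions $q$ on $\{1,\dots,k\}$.
   Context: For $i \in [k]$, $U_0(i) = \prod_{j=1}^{i-1} \frac{1 - c_{j+1}}{1 - d_j}$ and $U_1(i) = \prod_{l=i}^{k-1} \frac{d_l}{c_{l+1}}$ (empty products equal $1$). *)

From mathcomp Require Import all_boot all_order all_algebra.
Set Implicit Arguments. Unset Strict Implicit. Unset Printing Implicit Defensive.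
Import Order.TTheory GRing.Theory Num.Theory.
Local Open Scope ring_scope.

(* Endpoints are given as functions c d : nat -> R; only indices 1..k matter. *)

Definition U0 {R : realFieldType} (c d : nat -> R) (i : nat) : R :=
  \prod_(1 <= j < i) ((1 - c j.+1) / (1 - d j)).

Definition U1 {R : realFieldType} (c d : nat -> R) (k i : nat) : R :=
  \prod_(i <= l < k) (d l / c l.+1).

Definition meas {R : realFieldType} (c d : nat -> R) (k : nat) : R :=
  \sum_(1 <= i < k.+1) (d i - c i).

Definition is_distr {R : realFieldType} (k : nat) (q : nat -> R) : Prop :=
  (forall i, (1 <= i <= k)%N -> 0 <= q i) /\ \sum_(1 <= i < k.+1) q i = 1.

Definition expect {R : realFieldType} (k : nat) (q f : nat -> R) : R :=
  \sum_(1 <= i < k.+1) q i * f i.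

From mathcomp Require Import all_boot all_order all_algebra.
From mathcomp Require Import ring zify.
Set Implicit Arguments. Unset Strict Implicit. Unset Printing Implicit Defensive.
Import Order.TTheory GRing.Theory Num.Theory.
Local Open Scope ring_scope.

(* Put c_(k+1) = 1 and d_0 = 0 and weight the index i by the length
   w_i = c_(i+1) - d_(i-1) of the span from the end of interval i-1 to the
   start of interval i+1.  Both w_i U_0(i) and w_i U_1(i) telescope, to
   F(i) - F(i+1) with F(i) = U_0(i) (1 - d_(i-1)) and to G(i+1) - G(i) with
   G(i) = d_(i-1) U_1(i), so both weighted sums equal 1, while the total
   weight is 1 + d_k - c_1 - meas(E) = 2 - meas(E).  Normalising w gives a
   distribution under which both expectations equal 1 / (2 - meas(E)). *)

Section GapWeights.
Variables (R : realFieldType) (k : nat) (c d : nat -> R).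

Definition c_ext (j : nat) : R := if j == k.+1 then 1 else c j.
Definition d_ext (j : nat) : R := if j == 0%N then 0 else d j.
Definition gap_weight (i : nat) : R := c_ext i.+1 - d_ext i.-1.

Lemma c_extE [j] : (j <= k)%N -> c_ext j = c j.
Proof. by move=> jk; rewrite /c_ext ltn_eqF. Qed.

Lemma c_ext_last : c_ext k.+1 = 1.
Proof. by rewrite /c_ext eqxx. Qed.

Lemma d_extE [j] : (0 < j)%N -> d_ext j = d j.
Proof. by move=> j_gt0; rewrite /d_ext gtn_eqF. Qed.

Lemma d_ext0 : d_ext 0 = 0.
Proof. by []. Qed.

Lemma sum_gap_weight : (1 <= k)%N ->
  \sum_(1 <= i < k.+1) gap_weight i = 1 + d k - c 1%N - meas c d k.
Proof.
move=> k_gt0.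
have c_sum : \sum_(1 <= i < k.+1) c_ext i.+1 = \sum_(1 <= i < k) c i.+1 + 1.
  rewrite big_nat_recr //= c_ext_last; congr (_ + _).
  by apply: eq_big_nat => i /andP[_ ik]; rewrite c_extE.
have d_sum : \sum_(1 <= i < k.+1) d_ext i.-1 = \sum_(1 <= i < k) d i.
  rewrite big_nat_recl //= d_ext0 add0r.
  by apply: eq_big_nat => i /andP[i_gt0 _]; rewrite d_extE.
have meas_split : meas c d k
    = \sum_(1 <= i < k) d i + d k - (c 1%N + \sum_(1 <= i < k) c i.+1).
  by rewrite /meas sumrB big_nat_recr //= big_nat_recl.
rewrite /gap_weight sumrB c_sum d_sum meas_split; ring.
Qed.

Lemma U0S i : (1 <= i)%N ->
  U0 c d i.+1 = U0 c d i * ((1 - c i.+1) / (1 - d i)).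
Proof. by move=> i_gt0; rewrite /U0 big_nat_recr. Qed.

Lemma U1_recl [i] : (i < k)%N -> U1 c d k i = d i / c i.+1 * U1 c d k i.+1.
Proof. by move=> ik; rewrite /U1 big_ltn. Qed.

Hypotheses (k_gt0 : (1 <= k)%N) (dk1 : d k = 1).

Lemma sum_gap_weight_U0 : (forall i, (1 <= i < k)%N -> d i != 1) ->
  \sum_(1 <= i < k.+1) gap_weight i * U0 c d i = 1.
Proof.
move=> d_neq1; pose F i := U0 c d i * (1 - d_ext i.-1).
rewrite (telescope_sumr_eq (fun i => - F i)) => [|//|i /andP[i_gt0 ik]].
  by rewrite /F /= (d_extE k_gt0) d_ext0 dk1 subrr mulr0 /U0 big_geq //; ring.
rewrite /F /gap_weight /= (d_extE i_gt0) U0S //.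
move: ik; rewrite ltnS leq_eqVlt => /predU1P[-> | ik].
  by rewrite c_ext_last dk1; ring.
have di_neq1 : 1 - d i != 0 by rewrite subr_eq0 eq_sym d_neq1 ?i_gt0.
by rewrite c_extE //; field.
Qed.

Lemma sum_gap_weight_U1 : (forall i, (1 <= i < k)%N -> c i.+1 != 0) ->
  \sum_(1 <= i < k.+1) gap_weight i * U1 c d k i = 1.
Proof.
move=> c_neq0; pose G i := d_ext i.-1 * U1 c d k i.
rewrite (telescope_sumr_eq G) => [|//|i /andP[i_gt0 ik]].
  by rewrite /G /= (d_extE k_gt0) d_ext0 dk1 mul0r subr0 mul1r /U1 big_geq.
rewrite /G /gap_weight /= (d_extE i_gt0).
move: ik; rewrite ltnS leq_eqVlt => /predU1P[-> | ik].
  by rewrite c_ext_last dk1 /U1 !big_geq //; ring.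
have ci_neq0 : c i.+1 != 0 by apply: c_neq0; rewrite i_gt0.
by rewrite c_extE // (U1_recl ik); field.
Qed.

End GapWeights.

Section Normalisation.
Variables (R : realFieldType) (k : nat) (w : nat -> R).
Hypotheses (k_gt0 : (1 <= k)%N) (w_gt0 : forall i, (1 <= i <= k)%N -> 0 < w i).

Lemma sum_weights_gt0 : 0 < \sum_(1 <= i < k.+1) w i.
Proof.
rewrite big_ltn // ltr_pwDl ?w_gt0 ?k_gt0 //.
rewrite big_nat_cond sumr_ge0 // => i /andP[/andP[i_gt1 ik] _].
by rewrite ltW // w_gt0 //; lia.
Qed.

Lemma is_distr_normalised : is_distr k (fun i => w i / \sum_(1 <= j < k.+1) w j).
Proof.
have S_gt0 := sum_weights_gt0; split.
  by move=> i ik; rewrite divr_ge0 ?ltW ?w_gt0.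
by rewrite -mulr_suml divff // gt_eqF.
Qed.

End Normalisation.

Lemma expect_divl (R : realFieldType) k (w f : nat -> R) (s : R) :
  expect k (fun i => w i / s) f = expect k w f / s.
Proof. by rewrite /expect mulr_suml; apply: eq_bigr => i _; rewrite mulrAC. Qed.

Section Chain.
Variables (R : realFieldType) (k : nat) (c d : nat -> R).
Hypotheses (hc1 : c 1%N = 0) (hdk : d k = 1)
  (hcd : forall i, (1 <= i <= k)%N -> c i <= d i)
  (hdc : forall i, (1 <= i < k)%N -> d i < c i.+1).

Lemma d_nondecreasing :
  {in [pred n | 1 <= n <= k]%N &, {homo d : i j / (i <= j)%N >-> i <= j}}.
Proof.
apply: homo_leq_in => [//||m n|i].
- exact: le_trans.
- rewrite !inE => /andP[m_gt0 _] /andP[_ nk] p /andP[mp pn].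
  by rewrite inE; lia.
rewrite !inE => /andP[i_gt0 _] /andP[_ ik].
have di_lt : d i < c i.+1 by apply: hdc; rewrite i_gt0.
have ci_le : c i.+1 <= d i.+1 by apply: hcd; rewrite ik.
exact: ltW (lt_le_trans di_lt ci_le).
Qed.

Lemma d_ge0 i : (1 <= i <= k)%N -> 0 <= d i.
Proof.
move=> /andP[i_gt0 ik]; have k_gt0 := leq_trans i_gt0 ik.
have c1_le : c 1%N <= d 1%N by apply: hcd; rewrite k_gt0.
have d1_le : d 1%N <= d i by apply: d_nondecreasing; rewrite ?inE; lia.
by rewrite -hc1 (le_trans c1_le d1_le).
Qed.

Lemma d_lt1 i : (1 <= i < k)%N -> d i < 1.
Proof.
move=> /andP[i_gt0 ik].
have di_lt : d i < c i.+1 by apply: hdc; rewrite i_gt0.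
have ci_le : c i.+1 <= d i.+1 by apply: hcd; rewrite ik.
have di1_le : d i.+1 <= d k by apply: d_nondecreasing; rewrite ?inE; lia.
by rewrite -hdk (lt_le_trans di_lt) // (le_trans ci_le di1_le).
Qed.

Lemma c_gt0 i : (1 <= i < k)%N -> 0 < c i.+1.
Proof.
move=> /andP[i_gt0 ik].
have di_ge0 : 0 <= d i by apply: d_ge0; rewrite i_gt0 ltnW.
by rewrite (le_lt_trans di_ge0) // hdc ?i_gt0.
Qed.

Lemma d_ext_lt1 j : (j < k)%N -> d_ext d j < 1.
Proof.
by case: j => [|j] jk; [rewrite d_ext0 ltr01 | rewrite d_extE // d_lt1].
Qed.

Lemma gap_weight_gt0 i : (1 <= i <= k)%N -> 0 < gap_weight k c d i.
Proof.
move=> /andP[i_gt0 ik]; have k_gt0 := leq_trans i_gt0 ik.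
move: ik; rewrite /gap_weight subr_gt0 leq_eqVlt => /predU1P[-> | ik].
  by rewrite c_ext_last d_ext_lt1 ?ltn_predL.
have di_lt : d i < c i.+1 by apply: hdc; rewrite i_gt0.
rewrite c_extE //; apply: le_lt_trans di_lt.
case: i i_gt0 ik => [|[|i]] // _ ik.
  by rewrite d_ext0 d_ge0 // ltnW.
by rewrite d_extE // d_nondecreasing // inE; lia.
Qed.

End Chain.

Theorem claim3p5 (R : realFieldType) (k : nat) (c d : nat -> R)
  (hk : (1 <= k)%N)
  (hc1 : c 1%N = 0) (hdk : d k = 1)
  (hcd : forall i, (1 <= i <= k)%N -> c i <= d i)
  (hdc : forall i, (1 <= i < k)%N -> d i < c i.+1) :
  exists q : nat -> R, is_distr k q /\
    Num.min (expect k q (U0 c d)) (expect k q (U1 c d k))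
      >= 1 / (2 - meas c d k).
Proof.
pose w := gap_weight k c d.
have w_gt0 : forall i, (1 <= i <= k)%N -> 0 < w i by exact: gap_weight_gt0.
have total : \sum_(1 <= i < k.+1) w i = 2 - meas c d k.
  by rewrite sum_gap_weight // hc1 hdk; ring.
have sum_U0 : expect k w (U0 c d) = 1.
  by apply: sum_gap_weight_U0 => // i ik; rewrite lt_eqF // (d_lt1 hdk hcd hdc).
have sum_U1 : expect k w (U1 c d k) = 1.
  by apply: sum_gap_weight_U1 => // i ik; rewrite gt_eqF // (c_gt0 hc1 hcd hdc).
exists (fun i => w i / \sum_(1 <= j < k.+1) w j).
split; first exact: is_distr_normalised hk w_gt0.
by rewrite !expect_divl sum_U0 sum_U1 total minxx.
Qed.
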